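(* For all $\vec z,\vec a\in\mathbb{C}^n$, \[ \log\!\Big(\frac{1}{|\langle \pi_{\vec z}|\pi_{\vec a}\rangle|^2}\Big)\;\le\; d_{\tan}(|\pi_{\vec z}\rangle,|\pi_{\vec a}\rangle)^2\;\le\;\frac{1}{|\langle \pi_{\vec z}|\pi_{\vec a}\rangle|^2}-1, \] with the conventions that $\log(1/0)=1/0=+\infty$ and that a summand of $d_{\tan}^2$ whose denominator vanishes equals $+\infty$.
   Context: For $\vec z\in\mathbb{C}^n$, $|\pi_{\vec z}\rangle=\bigotimes_{i=1}^n \frac{|0\rangle+z_i|1\rangle}{\sqrt{1+|z_i|^2}}$ is an $n$-qubit pure product state. The tangent distance is $d_{\tan}(|\pi_{\vec z}\rangle,|\pi_{\vec a}\rangle)=\Big(\sum_{i=1}^n\Big|\frac{z_i-a_i}{1+z_i^*a_i}\Big|^2\Big)^{1/2}$, where $z^*$ denotes complex conjugation. *)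

From HB Require Import structures.
From mathcomp Require Import all_boot all_order all_algebra.
From mathcomp Require Import all_classical all_reals.
From mathcomp Require Import ereal exp.
From mathcomp.real_closed Require Import complex.
Set Implicit Arguments. Unset Strict Implicit. Unset Printing Implicit Defensive.
Import Order.TTheory GRing.Theory Num.Theory.
Local Open Scope ring_scope.
Local Open Scope complex_scope.

Section Defs.
Variable R : realType.

Definition norm2 (z : R[i]) : R := let: x +i* y := z in x ^+ 2 + y ^+ 2.

Definition qamp (z : R[i]) (b : 'I_2) : R[i] :=
  ((Num.sqrt (1 + norm2 z))^-1)%:C * (if val b == 0%N then 1 else z).

(* the n-qubit product state |pi_z> = tensor_i (|0> + z_i|1>)/sqrt(1+|z_i|^2),
   as amplitudes indexed by computational basis strings b : 'I_n -> {0,1} *)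
Definition pstate (n : nat) (z : 'I_n -> R[i]) : {ffun 'I_n -> 'I_2} -> R[i] :=
  fun b => \prod_(i < n) qamp (z i) (b i).

Definition braket (n : nat) (psi phi : {ffun 'I_n -> 'I_2} -> R[i]) : R[i] :=
  \sum_(b : {ffun 'I_n -> 'I_2}) (psi b)^* * phi b.

Definition overlap2 (n : nat) (z a : 'I_n -> R[i]) : R :=
  norm2 (braket (pstate z) (pstate a)).

Definition dtan2 (n : nat) (z a : 'I_n -> R[i]) : \bar R :=
  (\sum_(i < n)
     (if (1 + (z i)^* * a i == 0)%R then +oo
      else (norm2 (z i - a i) / norm2 (1 + (z i)^* * a i))%R%:E))%E.

Definition log_inv (p : R) : \bar R := if p == 0 then +oo%E else (ln (p^-1))%:E.

Definition inv_m1 (p : R) : \bar R := if p == 0 then +oo%E else (p^-1 - 1)%:E.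

End Defs.

(* A product state has overlap |<pi_z|pi_a>|^2 = prod_i p_i with the single-qubit overlaps
   p_i = |1 + z_i^* a_i|^2 / ((1 + |z_i|^2)(1 + |a_i|^2)).  The identity
   (1 + |x|^2)(1 + |y|^2) = |1 + x^* y|^2 + |x - y|^2 turns this into p_i = 1 / (1 + t_i),
   where t_i is the i-th summand of d_tan^2.  Both inequalities are then
   ln (prod_i (1 + t_i)) <= sum_i t_i <= prod_i (1 + t_i) - 1 for t_i >= 0, i.e. ln (1 + t) <= t
   summed over the factors and the expansion of the product. *)
From HB Require Import structures.
From mathcomp Require Import all_boot all_order all_algebra.
From mathcomp Require Import all_classical all_reals.
From mathcomp Require Import ereal exp.
From mathcomp.real_closed Require Import complex.
From mathcomp Require Import ring lra.
Import Order.TTheory GRing.Theory Num.Theory.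
Local Open Scope ring_scope.
Local Open Scope complex_scope.

Lemma prod1D_ge1 {R : realDomainType} {I : Type} (r : seq I) (f : I -> R) :
    (forall i, 0 <= f i) ->
  1 <= \prod_(i <- r) (1 + f i).
Proof.
move=> f_ge0; elim: r => [|x s IHs]; first by rewrite big_nil.
by rewrite big_cons; have := f_ge0 x; nra.
Qed.

Lemma sum_le_prod1D {R : realDomainType} {I : Type} (r : seq I) (f : I -> R) :
    (forall i, 0 <= f i) ->
  \sum_(i <- r) f i <= \prod_(i <- r) (1 + f i) - 1.
Proof.
move=> f_ge0; elim: r => [|x s IHs]; first by rewrite !big_nil subrr.
rewrite !big_cons; have := prod1D_ge1 s f f_ge0; have := f_ge0 x; nra.
Qed.

Lemma ln_prod {R : realType} {I : Type} (r : seq I) (F : I -> R) :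
    (forall i, 0 < F i) ->
  ln (\prod_(i <- r) F i) = \sum_(i <- r) ln (F i).
Proof.
move=> F_gt0; elim: r => [|x s IHs]; first by rewrite !big_nil ln1.
by rewrite !big_cons lnM ?IHs ?posrE ?F_gt0 ?prodr_gt0.
Qed.

Lemma ln_prod1D_le_sum {R : realType} {I : Type} (r : seq I) (f : I -> R) :
    (forall i, 0 <= f i) ->
  ln (\prod_(i <- r) (1 + f i)) <= \sum_(i <- r) f i.
Proof.
move=> f_ge0; rewrite ln_prod => [|i]; last by have := f_ge0 i; lra.
by apply: ler_sum => i _; apply: le_ln1Dx; have := f_ge0 i; lra.
Qed.

Section QubitOverlaps.
Variable R : realType.
Implicit Types (x y : R[i]) (r : R).

Lemma norm2_ge0 x : 0 <= norm2 x.
Proof. by case: x => u v; rewrite /norm2; nra. Qed.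

Lemma norm2_eq0 x : (norm2 x == 0) = (x == 0).
Proof.
case: x => u v; apply/eqP/eqP => [uv0|[-> ->]]; last by rewrite /norm2; ring.
have u0 : u = 0 by move: uv0; rewrite /norm2; nra.
have v0 : v = 0 by move: uv0; rewrite /norm2; nra.
by rewrite u0 v0.
Qed.

Lemma norm2M x y : norm2 (x * y) = norm2 x * norm2 y.
Proof. by case: x => u v; case: y => u' v'; simpc; rewrite /norm2; ring. Qed.

Lemma norm2_real r : norm2 r%:C = r ^+ 2.
Proof. by rewrite /norm2 /=; ring. Qed.

Lemma norm2_1 : norm2 (1 : R[i]) = 1.
Proof. by rewrite norm2_real expr1n. Qed.

Lemma mul_1Dnorm2 x y :
  (1 + norm2 x) * (1 + norm2 y) = norm2 (1 + x^* * y) + norm2 (x - y).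
Proof. by case: x => u v; case: y => u' v'; simpc; rewrite /norm2 /=; ring. Qed.

Definition qoverlap2 x y : R :=
  norm2 (1 + x^* * y) / ((1 + norm2 x) * (1 + norm2 y)).

Definition tan2 x y : R := norm2 (x - y) / norm2 (1 + x^* * y).

Lemma tan2_ge0 x y : 0 <= tan2 x y.
Proof. by rewrite divr_ge0 ?norm2_ge0. Qed.

Lemma qubit_braket x y : \sum_(c < 2) (qamp x c)^* * qamp y c =
  ((Num.sqrt (1 + norm2 x))^-1 * (Num.sqrt (1 + norm2 y))^-1)%:C * (1 + x^* * y).
Proof.
rewrite !big_ord_recl big_ord0 /qamp /=.
set s := (Num.sqrt _)^-1; set t := (Num.sqrt _)^-1; clearbody s t.
case: x => u v; case: y => u' v'; rewrite /conjc /=.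
(* unfold the literals so that [simpc] can compute componentwise *)
rewrite -[1 : R[i]]/(1 +i* 0) -[0 : R[i]]/(0 +i* 0).
by simpc; congr (_ +i* _); ring.
Qed.

Lemma norm2_qubit_braket x y :
  norm2 (\sum_(c < 2) (qamp x c)^* * qamp y c) = qoverlap2 x y.
Proof.
rewrite qubit_braket norm2M norm2_real /qoverlap2 mulrC; congr (_ * _).
by rewrite exprMn !exprVn !sqr_sqrtr ?addr_ge0 ?norm2_ge0 // invfM.
Qed.

Lemma qoverlap2_eq0 x y : 1 + x^* * y = 0 -> qoverlap2 x y = 0.
Proof. by move=> xy0; rewrite /qoverlap2 xy0 norm2_real expr0n !mul0r. Qed.

Lemma qoverlap2_tan2 x y : 1 + x^* * y != 0 -> qoverlap2 x y = (1 + tan2 x y)^-1.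
Proof.
rewrite -norm2_eq0 /qoverlap2 /tan2 mul_1Dnorm2 => den_neq0.
have den_gt0 : 0 < norm2 (1 + x^* * y) by rewrite lt_def den_neq0 norm2_ge0.
have := norm2_ge0 (x - y); move: den_gt0.
set D := norm2 _; set N := norm2 _ => D_gt0 N_ge0.
by field; apply/andP; split; apply/eqP; lra.
Qed.

End QubitOverlaps.

Arguments qoverlap2 {R}.
Arguments tan2 {R}.

Lemma overlap2_prod (R : realType) n (z a : 'I_n -> R[i]) :
  overlap2 z a = \prod_(i < n) qoverlap2 (z i) (a i).
Proof.
rewrite /overlap2 /braket /pstate.
under eq_bigr do rewrite rmorph_prod -big_split /=.
rewrite -(bigA_distr_bigA (fun i c => (qamp (z i) c)^* * qamp (a i) c)).
rewrite (big_morph (@norm2 R) (@norm2M R) (norm2_1 R)).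
by apply: eq_bigr => i _; rewrite norm2_qubit_braket.
Qed.

Lemma dtan2_eqy {R : realType} {n} {z a : 'I_n -> R[i]} {i} :
  1 + (z i)^* * a i = 0 -> dtan2 z a = +oo%E.
Proof.
move=> den0; apply/esum_eqyP => [j _|]; first by case: ifP.
by exists i; rewrite mem_index_enum den0 eqxx.
Qed.

Lemma dtan2_sum (R : realType) n (z a : 'I_n -> R[i]) :
  (forall i, 1 + (z i)^* * a i != 0) ->
  dtan2 z a = (\sum_(i < n) tan2 (z i) (a i))%:E.
Proof. by move=> den_neq0; rewrite -sumEFin; apply: eq_bigr => i _; rewrite ifN. Qed.

Theorem lemma3p5 (R : realType) (n : nat) (z a : 'I_n -> R[i]) :
  (log_inv (overlap2 z a) <= dtan2 z a <= inv_m1 (overlap2 z a))%E.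
Proof.
rewrite /log_inv /inv_m1 overlap2_prod.
case: (pickP (fun i => 1 + (z i)^* * a i == 0)) => [i /eqP den0|den_ne0].
  rewrite (bigD1 i) //= qoverlap2_eq0 // mul0r eqxx.
  by rewrite (dtan2_eqy den0) lexx.
have den_neq0 i : 1 + (z i)^* * a i != 0 by rewrite den_ne0.
set t := fun i => tan2 (z i) (a i).
have t_ge0 i : 0 <= t i by exact: tan2_ge0.
have -> : \prod_(i < n) qoverlap2 (z i) (a i) = (\prod_(i < n) (1 + t i))^-1.
  by rewrite -prodfV; apply: eq_bigr => i _; rewrite qoverlap2_tan2 ?den_neq0.
have prod_ge1 := prod1D_ge1 (index_enum 'I_n) t t_ge0.
have prod_neq0 : \prod_(i < n) (1 + t i) != 0.
  by rewrite gt_eqF // (lt_le_trans ltr01 prod_ge1).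
rewrite invr_eq0 (negbTE prod_neq0) invrK dtan2_sum // !lee_fin.
by rewrite ln_prod1D_le_sum ?sum_le_prod1D.
Qed.
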